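(* There exists a proper temporal graph $\mathcal G$ whose reachability graph is not isomorphic to the non-strict-journey reachability graph of any simple temporal graph $\mathcal H$. (For instance, $\mathcal G$ the path $a-b-c-d$ with $\lambda(ab)=\{2\}$, $\lambda(bc)=\{1,3\}$, $\lambda(cd)=\{2\}$, whose reachability graph has arcs in both directions between every pair of vertices except $a$ and $d$.)
   Context: A temporal graph is a triple $\mathcal G=(V,E,\lambda)$ where $V$ is a finite vertex set, $E$ is a set of undirected edges on $V$, and $\lambda:E\to 2^{\mathbb N}\setminus\{\emptyset\}$ assigns to each edge a nonempty set of presence times. The footprint of $\mathcal G$ is the static graph $(V,E)$. A contact is a pair $(e,t)$ with $e\in E$ and $t\in\lambda(e)$. A journey from $u$ to $v$ is a sequence of contacts $(e_1,t_1),\dots,(e_k,t_k)$, $k\ge 1$, such that $e_1,\dots,e_k$ form a path from $u$ to $v$ in the footprint and $t_1\le t_2\le\dots\le t_k$ (a non-strict journey); it is strict if $t_1<t_2<\dots<t_k$. $\mathcal G$ is proper if $\lambda(e)\cap\lambda(e')=\emptyset$ for any two distinct edges $e,e'$ sharing an endpoint (in a proper graph every journey is strict); simple if $|\lambda(e)|=1$ for every edge $e$. The reachability graph $\mathcal C(\mathcal G)$ (with respect to a chosen journey notion) is the directed graph on $V$ having an arc $(u,v)$, $u\neq v$, if and only if there is a journey from $u$ to $v$. Reachability graphs are compared up to isomorphism of directed graphs. *)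

From mathcomp Require Import all_boot.
Set Implicit Arguments. Unset Strict Implicit. Unset Printing Implicit Defensive.

(* A temporal graph on a finite vertex type V: an undirected edge relation
   (the footprint) and, for each edge, a set of presence times (subset of nat). *)
Record tgraph (V : finType) := TGraph {
  tedge : rel V;
  tlab  : V -> V -> nat -> Prop
}.

Definition tgraph_wf (V : finType) (G : tgraph V) : Prop :=
  (forall u v, tedge G u v = tedge G v u) /\
  (forall u, ~~ tedge G u u) /\
  (forall u v t, tlab G u v t <-> tlab G v u t) /\
  (forall u v t, tlab G u v t -> tedge G u v) /\
  (forall u v, tedge G u v -> exists t, tlab G u v t).

Definition tproper (V : finType) (G : tgraph V) : Prop :=
  forall u v w t, tedge G u v -> tedge G u w -> v != w ->
    tlab G u v t -> tlab G u w t -> False.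

Definition tsimple (V : finType) (G : tgraph V) : Prop :=
  forall u v, tedge G u v -> exists! t, tlab G u v t.

(* A sequence of contacts leaving vertex x, each step (y, t) traversing edge
   {x,y} at time t, consecutive times related by cmp (<= or <). *)
Fixpoint contacts_ok (V : finType) (G : tgraph V) (cmp : nat -> nat -> bool)
    (x : V) (t0 : option nat) (s : seq (V * nat)) : Prop :=
  match s with
  | [::] => True
  | (y, t) :: s' =>
      [/\ tedge G x y, tlab G x y t,
          (match t0 with None => True | Some t' => cmp t' t end)
        & contacts_ok G cmp y (Some t) s']
  end.

(* A journey from u to v (k >= 1 contacts whose edges form a path in the
   footprint, i.e. visited vertices pairwise distinct). *)
Definition journey (V : finType) (G : tgraph V) (cmp : nat -> nat -> bool)
    (u v : V) : Prop :=
  exists s : seq (V * nat),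
    [/\ s != [::], uniq (u :: map fst s), last u (map fst s) = v
      & contacts_ok G cmp u None s].

Definition nonstrict_journey V (G : tgraph V) := journey G leq.
Definition strict_journey V (G : tgraph V) := journey G ltn.

Definition reach_nonstrict V (G : tgraph V) (u v : V) : Prop :=
  u != v /\ nonstrict_journey G u v.
Definition reach_strict V (G : tgraph V) (u v : V) : Prop :=
  u != v /\ strict_journey G u v.

Definition digraph_iso (V W : finType) (A : V -> V -> Prop) (B : W -> W -> Prop)
  : Prop :=
  exists f : V -> W, bijective f /\ forall x y, A x y <-> B (f x) (f y).

(* Along the path a-b-c-d with labels 2, {1,3}, 2, strict journeys connect every
   pair except a and d, since a strict journey from a to d would need 2 < t < 2.
   Suppose a simple H realises this digraph with non-strict journeys, x and w
   being the images of a and d.  Then x and w are neither adjacent nor have a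
   common neighbour (one or two contacts, ordered by their labels, would give a
   journey between them), so the footprint of H is the path x-y-z-w.  Journeys
   in both directions between x and z force the single labels of xy and yz to
   coincide, and likewise for yz and zw; a non-strict journey then crosses the
   whole path at one instant, from x to w. *)

From mathcomp Require Import all_boot.
From Stdlib Require Import Lia.
Set Implicit Arguments. Unset Strict Implicit. Unset Printing Implicit Defensive.

Section Journeys.
Variables (V : finType) (G : tgraph V) (cmp : nat -> nat -> bool).
Hypothesis wfG : tgraph_wf G.

Lemma tlab_sym u v t : tlab G u v t -> tlab G v u t.
Proof. by case: wfG => _ [_ [/(_ u v t) []]]. Qed.

Lemma tlab_edge u v t : tlab G u v t -> tedge G u v.
Proof. by case: wfG => _ [_ [_ [/(_ u v t)]]]. Qed.

Lemma tedge_lab u v : tedge G u v -> exists t, tlab G u v t.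
Proof. by case: wfG => _ [_ [_ [_ /(_ u v)]]]. Qed.

Lemma tedge_sym u v : tedge G u v = tedge G v u.
Proof. by case: wfG. Qed.

Lemma tedge_irrefl u : ~~ tedge G u u.
Proof. by case: wfG => _ []. Qed.

Lemma journey1 u v t : u != v -> tlab G u v t -> journey G cmp u v.
Proof.
move=> uv l; exists [:: (v, t)]; split => //=; first by rewrite inE uv.
by split => //; apply: tlab_edge l.
Qed.

Lemma journey2 u m v t1 t2 : uniq [:: u; m; v] ->
  tlab G u m t1 -> tlab G m v t2 -> cmp t1 t2 -> journey G cmp u v.
Proof.
move=> un l1 l2 c12; exists [:: (m, t1); (v, t2)]; split => //=.
by split => //; [apply: tlab_edge l1 | split => //; apply: tlab_edge l2].
Qed.

Lemma journey3 u m1 m2 v t1 t2 t3 : uniq [:: u; m1; m2; v] ->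
  tlab G u m1 t1 -> tlab G m1 m2 t2 -> tlab G m2 v t3 ->
  cmp t1 t2 -> cmp t2 t3 -> journey G cmp u v.
Proof.
move=> un l1 l2 l3 c12 c23; exists [:: (m1, t1); (m2, t2); (v, t3)].
split => //=; split; rewrite ?(tlab_edge l1) //.
by split; rewrite ?(tlab_edge l2) //; split; rewrite ?(tlab_edge l3).
Qed.

Lemma journey_first_edge u v : journey G cmp u v -> exists m, tedge G u m.
Proof. by case=> [[|[m t] s]] [] // _ _ _ [] e; exists m. Qed.

End Journeys.

Section PathFootprint.
Variables (V : finType) (G : tgraph V) (cmp : nat -> nat -> bool).
Variables (x y z w : V).
Hypothesis xyzw_uniq : uniq [:: x; y; z; w].
Hypothesis nbr_x : forall v, tedge G x v -> v = y.
Hypothesis nbr_y : forall v, tedge G y v -> v = x \/ v = z.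
Hypothesis nbr_z : forall v, tedge G z v -> v = y \/ v = w.
Hypothesis nbr_w : forall v, tedge G w v -> v = z.

Lemma path_journey_xz : journey G cmp x z ->
  exists t1 t2, [/\ tlab G x y t1, tlab G y z t2 & cmp t1 t2].
Proof.
move: xyzw_uniq; rewrite /= !inE !negb_or => /and4P[/and3P[xy xz _] /andP[yz _] _ _].
case=> [[|[u1 t1] [|[u2 t2] s]]] [] //= _.
- by move=> _ ezu [/nbr_x eu1]; rewrite -ezu eu1 eqxx in yz.
- rewrite !inE => /andP[/norP[_ /norP[xu2 _]] _] _ [/nbr_x eu1 l1 _ [e2 l2 c12 _]].
  subst u1; case: (nbr_y e2) => eu2; subst u2; first by rewrite eqxx in xu2.
  by exists t1, t2.
Qed.

Lemma path_journey_zx : journey G cmp z x ->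
  exists t1 t2, [/\ tlab G z y t1, tlab G y x t2 & cmp t1 t2].
Proof.
move: xyzw_uniq; rewrite /= !inE !negb_or => /and4P[/and3P[xy _ xw] _ _ _].
case=> [[|[u1 t1] [|[u2 t2] s]]] [] //= _.
- move=> _ eu1x [/nbr_z eu1 _ _ _].
  by case: eu1 eu1x => -> ex; rewrite ex eqxx ?andbF in xy xw.
- rewrite !inE => /andP[/norP[_ /norP[zu2 _]] _] _ [/nbr_z eu1 l1 _ [e2 l2 c12 _]].
  case: eu1 => eu1; subst u1; last by rewrite (nbr_w e2) eqxx in zu2.
  case: (nbr_y e2) => eu2; subst u2; last by rewrite eqxx in zu2.
  by exists t1, t2.
Qed.

Lemma path_journey_xw : journey G cmp x w ->
  exists t1 t2 t3, [/\ tlab G x y t1, tlab G y z t2, tlab G z w t3,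
                       cmp t1 t2 & cmp t2 t3].
Proof.
move: xyzw_uniq; rewrite /= !inE !negb_or.
move=> /and4P[/and3P[_ _ xw] /andP[_ yw] zw _].
case=> [[|[u1 t1] [|[u2 t2] [|[u3 t3] s]]]] [] //= _.
- by move=> _ ew [/nbr_x eu1]; rewrite -ew eu1 eqxx in yw.
- move=> _ ew [/nbr_x eu1 _ _ [e2 _ _ _]]; rewrite eu1 ew in e2.
  by case: (nbr_y e2) => ewv; rewrite ewv eqxx in xw zw.
- rewrite !inE => /and3P[/norP[_ /norP[xu2 _]] /norP[_ /norP[u1u3 _]] _] _.
  move=> [/nbr_x eu1 l1 _ [e2 l2 c12 [e3 l3 c23 _]]].
  subst u1; case: (nbr_y e2) => eu2; subst u2; first by rewrite eqxx in xu2.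
  case: (nbr_z e3) => eu3; subst u3; first by rewrite eqxx in u1u3.
  by exists t1, t2, t3.
Qed.

End PathFootprint.

Lemma common_neighbour_journey (V : finType) (G : tgraph V) u m w :
  tgraph_wf G -> u != w -> tedge G u m -> tedge G w m ->
  nonstrict_journey G u w \/ nonstrict_journey G w u.
Proof.
move=> wfG uw eu ew.
have um : u != m by apply: contraTneq eu => <-; rewrite tedge_irrefl.
have wm : w != m by apply: contraTneq ew => <-; rewrite tedge_irrefl.
have [[t1 l1] [t2 l2]] := (tedge_lab wfG eu, tedge_lab wfG ew).
have [le12 | /ltnW le21] := leqP t1 t2; [left | right].
- apply: (journey2 (cmp := leq) wfG) _ l1 (tlab_sym wfG l2) le12.
  by rewrite /= !inE negb_or um uw (eq_sym m) wm.
- apply: (journey2 (cmp := leq) wfG) _ l2 (tlab_sym wfG l1) le21.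
  by rewrite /= !inE negb_or wm (eq_sym w) uw (eq_sym m) um.
Qed.

Section SimpleTemporalGraph.
Variables (W : finType) (H : tgraph W).
Hypotheses (wfH : tgraph_wf H) (simH : tsimple H).

Lemma simple_tlab_uniq u v t1 t2 : tlab H u v t1 -> tlab H u v t2 -> t1 = t2.
Proof.
move=> l1 l2; have [t [_ uniq_t]] := simH (tlab_edge wfH l1).
by rewrite -(uniq_t _ l1) -(uniq_t _ l2).
Qed.

Lemma simple_path_journey (x y z w : W) : uniq [:: x; y; z; w] ->
  (forall v, tedge H x v -> v = y) -> (forall v, tedge H y v -> v = x \/ v = z) ->
  (forall v, tedge H z v -> v = y \/ v = w) -> (forall v, tedge H w v -> v = z) ->
  nonstrict_journey H x z -> nonstrict_journey H z x ->
  nonstrict_journey H w y -> nonstrict_journey H y w ->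
  nonstrict_journey H x w.
Proof.
move=> un nbr_x nbr_y nbr_z nbr_w jxz jzx jwy jyw.
have nu : uniq [:: w; z; y; x] by rewrite -(rev_uniq [:: x; y; z; w]) in un.
have nbr_z' v : tedge H z v -> v = w \/ v = y by move=> /nbr_z [] ->; [right | left].
have nbr_y' v : tedge H y v -> v = z \/ v = x by move=> /nbr_y [] ->; [right | left].
have [a [b [lxy lyz ab]]] := @path_journey_xz _ _ leq _ _ _ _ un nbr_x nbr_y jxz.
have [b' [a' [lzy lyx ba]]] := @path_journey_zx _ _ leq _ _ _ _ un nbr_y nbr_z nbr_w jzx.
have [c [d [lwz lzy' cd]]] := @path_journey_xz _ _ leq _ _ _ _ nu nbr_w nbr_z' jwy.
have [d' [c' [lyz' lzw dc]]] := @path_journey_zx _ _ leq _ _ _ _ nu nbr_z' nbr_y' nbr_x jyw.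
have same u v t t' : tlab H u v t -> tlab H v u t' -> t = t'.
  by move=> l l'; apply: simple_tlab_uniq l (tlab_sym wfH l').
rewrite -(same _ _ _ _ lxy lyx) -(same _ _ _ _ lyz lzy) in ba.
rewrite -(same _ _ _ _ lwz lzw) (same _ _ _ _ lyz' lzy') in dc.
rewrite (simple_tlab_uniq lzy' lzy) -(same _ _ _ _ lyz lzy) in cd dc.
have eb : b = a by apply/eqP; rewrite eqn_leq ab ba.
have ec : c = a by apply/eqP; rewrite eqn_leq -eb cd dc.
rewrite eb in lyz; rewrite ec in lwz.
exact: (journey3 wfH) un lxy lyz (tlab_sym wfH lwz) (leqnn a) (leqnn a).
Qed.

Lemma simple_K4_minus_edge_journey (x y z w : W) :
  uniq [:: x; y; z; w] -> (forall v, v \in [:: x; y; z; w]) ->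
  nonstrict_journey H x y -> nonstrict_journey H y x ->
  nonstrict_journey H x z -> nonstrict_journey H z x ->
  nonstrict_journey H w y -> nonstrict_journey H y w ->
  nonstrict_journey H w z -> nonstrict_journey H z w ->
  nonstrict_journey H x w \/ nonstrict_journey H w x.
Proof.
move=> un cover jxy jyx jxz jzx jwy jyw jwz jzw.
have xw : x != w by move: un; rewrite /= !inE !negb_or => /and4P[/and3P[]].
have [exw | nxw] := boolP (tedge H x w).
  by have [t l] := tedge_lab wfH exw; left; apply: (journey1 leq wfH) xw l.
have [u exu] := journey_first_edge jxy.
wlog exy : y z un cover jxy jyx jxz jzx jwy jyw jwz jzw / tedge H x y.
  move=> hwlog; have := cover u; rewrite !inE => /or4P[] /eqP eu; subst u.
  - by case/negP: (tedge_irrefl wfH x).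
  - exact: hwlog jxy jyx jxz jzx jwy jyw jwz jzw exu.
  - have swap_yz : perm_eq [:: x; z; y; w] [:: x; y; z; w].
      by rewrite perm_cons (perm_catCA [:: z] [:: y] [:: w]).
    apply: hwlog jxz jzx jxy jyx jwz jzw jwy jyw exu; first by rewrite (perm_uniq swap_yz).
    by move=> v; rewrite (perm_mem swap_yz).
  - by rewrite exu in nxw.
clear u exu.
have [ewy | nwy] := boolP (tedge H w y); first exact: common_neighbour_journey wfH xw exy ewy.
have [v ewv] := journey_first_edge jwz.
have nwx : ~~ tedge H w x by rewrite tedge_sym.
have nyw : ~~ tedge H y w by rewrite tedge_sym.
have ewz : tedge H w z.
  have := cover v; rewrite !inE => /or4P[] /eqP ev; subst v => //.
  - by rewrite (negPf nwx) in ewv.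
  - by rewrite (negPf nwy) in ewv.
  - by rewrite (negPf (tedge_irrefl wfH w)) in ewv.
have [exz | nxz] := boolP (tedge H x z); first exact: common_neighbour_journey wfH xw exz ewz.
have nzx : ~~ tedge H z x by rewrite tedge_sym.
left; apply: simple_path_journey un _ _ _ _ jxz jzx jwy jyw => a;
  have := cover a; rewrite !inE => /or4P[] /eqP -> e; auto;
  by rewrite ?(negPf (tedge_irrefl wfH _)) ?(negPf nxw) ?(negPf nwx) ?(negPf nxz)
    ?(negPf nzx) ?(negPf nwy) ?(negPf nyw) in e.
Qed.

End SimpleTemporalGraph.

Definition va : 'I_4 := @Ordinal 4 0 isT.
Definition vb : 'I_4 := @Ordinal 4 1 isT.
Definition vc : 'I_4 := @Ordinal 4 2 isT.
Definition vd : 'I_4 := @Ordinal 4 3 isT.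

Definition example_edge : rel 'I_4 :=
  fun u v => (u.+1 == v :> nat) || (v.+1 == u :> nat).

Definition example_lab (u v : 'I_4) (t : nat) : Prop :=
  example_edge u v /\ (if minn u v == 1 then t = 1 \/ t = 3 else t = 2).

Definition example_tgraph : tgraph 'I_4 := TGraph example_edge example_lab.

Lemma example_cover v : v \in [:: va; vb; vc; vd].
Proof. by case: v => [[|[|[|[|?]]]] ?]. Qed.

Lemma example_wf : tgraph_wf example_tgraph.
Proof.
split; [|split; [|split; [|split]]] => /=.
- by move=> u v; rewrite /example_edge orbC.
- by move=> [[|[|[|[|?]]]] ?].
- by move=> u v t; rewrite /example_lab /example_edge orbC minnC.
- by move=> u v t [].
- move=> [[|[|[|[|?]]]] ?] // [[|[|[|[|?]]]] ?] //= _; rewrite /example_lab /=;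
    by [exists 2 | exists 1; split => //; left].
Qed.

Lemma example_proper : tproper example_tgraph.
Proof.
move=> [[|[|[|[|?]]]] ?] // [[|[|[|[|?]]]] ?] // [[|[|[|[|?]]]] ?] // t _ _ _;
  rewrite /= /example_lab /=; lia.
Qed.

Lemma example_no_strict_journey_ad : ~ strict_journey example_tgraph va vd.
Proof.
case/(@path_journey_xw _ _ ltn va vb vc vd isT);
  try by move=> [[|[|[|[|?]]]] ?] //= _; (left + right + idtac); apply: val_inj.
by move=> t1 [t2 [t3 [[_ /= ->] _ [_ /= ->] lt12 /(ltn_trans lt12)]]].
Qed.

Lemma example_no_strict_journey_da : ~ strict_journey example_tgraph vd va.
Proof.
case/(@path_journey_xw _ _ ltn vd vc vb va isT);
  try by move=> [[|[|[|[|?]]]] ?] //= _; (left + right + idtac); apply: val_inj.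
by move=> t1 [t2 [t3 [[_ /= ->] _ [_ /= ->] lt12 /(ltn_trans lt12)]]].
Qed.

Lemma example_reach_strict u v : reach_strict example_tgraph u v <->
  u != v /\ (u, v) \notin [:: (va, vd); (vd, va)].
Proof.
split=> [[uv j] | [uv nad]].
  split => //; rewrite !inE; apply/norP; split; apply/eqP => -[eu ev]; subst u v.
  - exact: example_no_strict_journey_ad j.
  - exact: example_no_strict_journey_da j.
split => //; move: (example_cover u) (example_cover v) uv nad.
rewrite !inE => /or4P[] /eqP-> /or4P[] /eqP-> //= _ _;
  [ exists [:: (vb, 2)] | exists [:: (vb, 2); (vc, 3)]
  | exists [:: (va, 2)] | exists [:: (vc, 1)] | exists [:: (vc, 1); (vd, 2)]
  | exists [:: (vb, 1); (va, 2)] | exists [:: (vb, 1)] | exists [:: (vd, 2)]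
  | exists [:: (vc, 2); (vb, 3)] | exists [:: (vc, 2)] ];
  by do !split; simpl; auto.
Qed.

Theorem mainTheorem5 :
  exists (V : finType) (G : tgraph V),
    [/\ tgraph_wf G, tproper G &
      forall (W : finType) (H : tgraph W), tgraph_wf H -> tsimple H ->
        ~ digraph_iso (@reach_strict V G) (@reach_nonstrict W H)].
Proof.
exists 'I_4, example_tgraph; split; [exact: example_wf | exact: example_proper |].
move=> W H wfH simH [f [[g fK gK] f_iso]].
have f_inj := can_inj fK.
have reachH u v : reach_nonstrict H (f u) (f v) <->
    u != v /\ (u, v) \notin [:: (va, vd); (vd, va)].
  by rewrite -example_reach_strict f_iso.
have jH u v : u != v -> (u, v) \notin [:: (va, vd); (vd, va)] ->
    nonstrict_journey H (f u) (f v).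
  by move=> uv nad; case: (reachH u v).2.
have cover w : w \in [:: f va; f vb; f vc; f vd].
  by rewrite -(gK w); apply: (map_f f (example_cover (g w))).
have f_uniq : uniq (map f [:: va; vb; vc; vd]) by rewrite (map_inj_uniq f_inj).
have fad : f va != f vd by rewrite (inj_eq f_inj).
have fda : f vd != f va by rewrite eq_sym.
have [jad | jda] := simple_K4_minus_edge_journey wfH simH f_uniq cover
  (jH va vb isT isT) (jH vb va isT isT) (jH va vc isT isT) (jH vc va isT isT)
  (jH vd vb isT isT) (jH vb vd isT isT) (jH vd vc isT isT) (jH vc vd isT isT).
- by case/reachH: (conj fad jad).
- by case/reachH: (conj fda jda).
Qed.
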